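(* Let $\kappa$ be a regular uncountable cardinal and $J$ a $\kappa$-complete ideal on $\kappa$. (i) Suppose that $\clubsuit_\kappa^{{\rm cof}/\sigma, -/\tau}[J]$ holds, where $\sigma < \kappa$ is an infinite cardinal with $\kappa^\sigma = \kappa$ and $\tau$ is a cardinal with $1 \leq \tau < \kappa$. Then $\clubsuit_\kappa^{-/\tau}[J]$ holds. (ii) Suppose that $\clubsuit_\kappa^{{\rm cof}/\sigma, -}[J]$ holds, where $\sigma < \kappa$ is an infinite cardinal with $\kappa^\sigma = \kappa$. Then $\clubsuit_\kappa^-[J]$ holds.
   Context: An ideal on $\kappa$ is a nonempty $J \subseteq P(\kappa)$ with $\kappa \notin J$, every bounded subset of $\kappa$ in $J$, $J$ closed under subsets and under unions of two members; $J^+ = P(\kappa)\setminus J$; $\kappa$-complete means closed under unions of fewer than $\kappa$ members. $P_\sigma(X) = \{x \subseteq X : |x| < \sigma\}$; $[\kappa]^\kappa$ is the set of size-$\kappa$ subsets of $\kappa$; $acc(\kappa)$ is the set of nonzero limit ordinals below $\kappa$. $\clubsuit_\kappa^{{\rm cof}/\sigma,-/\tau}[J]$: there are $B^i_\delta \in P_\sigma(\delta)$ for $\delta < \kappa$, $i < \tau$, such that for every $W \in [\kappa]^\kappa$, $\{\delta < \kappa : \exists i < \tau\,(\sup(W \cap B^i_\delta) = \delta)\} \in J^+$. $\clubsuit_\kappa^{{\rm cof}/\sigma,-}[J]$: there are $B^i_\delta \in P_\sigma(\delta)$ for $i < \delta < \kappa$ such that for every $W \in [\kappa]^\kappa$,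 $\{\delta < \kappa : \exists i < \delta\,(\sup(W \cap B^i_\delta) = \delta)\} \in J^+$. $\clubsuit_\kappa^{-/\tau}[J]$: there are $B^i_\delta \subseteq \delta$ with $\sup B^i_\delta = \delta$ for $\delta \in acc(\kappa)$, $i < \tau$, such that $\{\delta \in acc(\kappa) : \exists i < \tau\,(B^i_\delta \subseteq W)\} \in J^+$ for every $W \in [\kappa]^\kappa$. $\clubsuit_\kappa^-[J]$: the same with $i < \delta$ in place of $i < \tau$ (the sets indexed by $\delta \in acc(\kappa)$ and $i < \delta$). *)

(* Cardinals are modelled by types (cardinality comparison via
   injections); the cardinal kappa is modelled by a type K carrying a
   well-order [lt] of order type kappa (an initial ordinal), so that the
   ordinals below kappa are the elements of K. *)
Set Implicit Arguments.

Definition injective {A B : Type} (f : A -> B) : Prop :=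
  forall x y, f x = f y -> x = y.
Definition inj_le (A B : Type) : Prop := exists f : A -> B, injective f.
Definition card_lt (A B : Type) : Prop := ~ inj_le B A.

Definition sub {K : Type} (X : K -> Prop) : Type := { y : K | X y }.

Record is_well_order {K : Type} (lt : K -> K -> Prop) : Prop := {
  wo_irrefl : forall x, ~ lt x x;
  wo_trans : forall x y z, lt x y -> lt y z -> lt x z;
  wo_total : forall x y, lt x y \/ x = y \/ lt y x;
  wo_wf : well_founded lt }.

Definition le {K : Type} (lt : K -> K -> Prop) (x y : K) : Prop := lt x y \/ x = y.

Definition bounded {K : Type} (lt : K -> K -> Prop) (X : K -> Prop) : Prop :=
  exists b, forall y, X y -> lt y b.

Definition is_cardinal_order {K : Type} (lt : K -> K -> Prop) : Prop :=
  is_well_order lt /\ forall x : K, card_lt (sub (fun y => lt y x)) K.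

Definition regular {K : Type} (lt : K -> K -> Prop) : Prop :=
  forall X : K -> Prop, ~ bounded lt X -> inj_le K (sub X).

Definition uncountable (K : Type) : Prop := card_lt nat K.

Definition regular_uncountable_cardinal {K : Type} (lt : K -> K -> Prop) : Prop :=
  is_cardinal_order lt /\ regular lt /\ uncountable K.

Definition is_ideal {K : Type} (lt : K -> K -> Prop) (J : (K -> Prop) -> Prop) : Prop :=
  (exists A, J A) /\
  ~ J (fun _ => True) /\
  (forall X, bounded lt X -> J X) /\
  (forall X Y, J Y -> (forall x, X x -> Y x) -> J X) /\
  (forall X Y, J X -> J Y -> J (fun x => X x \/ Y x)).

Definition kappa_complete {K : Type} (J : (K -> Prop) -> Prop) : Prop :=
  forall (I : Type) (A : I -> K -> Prop),
    card_lt I K -> (forall i, J (A i)) -> J (fun x => exists i, A i x).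

Definition Jpos {K : Type} (J : (K -> Prop) -> Prop) (X : K -> Prop) : Prop := ~ J X.

Definition sup_eq {K : Type} (lt : K -> K -> Prop) (X : K -> Prop) (delta : K) : Prop :=
  (forall x, X x -> le lt x delta) /\
  (forall g, (forall x, X x -> le lt x g) -> le lt delta g).

Definition P_sigma {K : Type} (S : Type) (lt : K -> K -> Prop) (delta : K) (B : K -> Prop) : Prop :=
  (forall x, B x -> lt x delta) /\ card_lt (sub B) S.

Definition size_kappa {K : Type} (W : K -> Prop) : Prop := inj_le K (sub W).

Definition acc {K : Type} (lt : K -> K -> Prop) (delta : K) : Prop :=
  (exists g, lt g delta) /\ forall g, lt g delta -> exists b, lt g b /\ lt b delta.

Definition clubsuit_cof_tau {K : Type} (lt : K -> K -> Prop) (J : (K -> Prop) -> Prop)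
    (S Tau : Type) : Prop :=
  exists B : K -> Tau -> K -> Prop,
    (forall delta i, P_sigma S lt delta (B delta i)) /\
    forall W : K -> Prop, size_kappa W ->
      Jpos J (fun delta => exists i : Tau, sup_eq lt (fun x => W x /\ B delta i x) delta).

Definition clubsuit_cof {K : Type} (lt : K -> K -> Prop) (J : (K -> Prop) -> Prop)
    (S : Type) : Prop :=
  exists B : K -> K -> K -> Prop,
    (forall delta i, lt i delta -> P_sigma S lt delta (B delta i)) /\
    forall W : K -> Prop, size_kappa W ->
      Jpos J (fun delta => exists i, lt i delta /\ sup_eq lt (fun x => W x /\ B delta i x) delta).

Definition clubsuit_tau {K : Type} (lt : K -> K -> Prop) (J : (K -> Prop) -> Prop)
    (Tau : Type) : Prop :=
  exists B : K -> Tau -> K -> Prop,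
    (forall delta i, acc lt delta ->
        (forall x, B delta i x -> lt x delta) /\ sup_eq lt (B delta i) delta) /\
    forall W : K -> Prop, size_kappa W ->
      Jpos J (fun delta => acc lt delta /\ exists i : Tau, forall x, B delta i x -> W x).

Definition clubsuit_minus {K : Type} (lt : K -> K -> Prop) (J : (K -> Prop) -> Prop) : Prop :=
  exists B : K -> K -> K -> Prop,
    (forall delta i, acc lt delta -> lt i delta ->
        (forall x, B delta i x -> lt x delta) /\ sup_eq lt (B delta i) delta) /\
    forall W : K -> Prop, size_kappa W ->
      Jpos J (fun delta => acc lt delta /\ exists i, lt i delta /\ forall x, B delta i x -> W x).

(* sigma < kappa infinite with kappa^sigma = kappa (|S -> K| <= |K|; the
   reverse inequality is automatic) *)
Definition good_sigma (K S : Type) : Prop :=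
  inj_le nat S /\ card_lt S K /\ inj_le (S -> K) K.

Definition good_tau (K Tau : Type) : Prop :=
  inhabited Tau /\ card_lt Tau K.

From Stdlib Require Import Classical ClassicalEpsilon FunctionalExtensionality Wellfounded.

(* Suppose no ladder system guesses every [W] of size kappa J-positively, and fix for each
   ladder system [C] a set [W] refuting it. Since kappa^sigma = kappa, every function
   S -> kappa has cofinally many codes xi < kappa. Well-order S and define by recursion on
   y : S the ladder system C_y whose ladder at (delta, i) is
   { X_xi(y) : xi in B^i_delta, X_xi(y') in W_y' for all y' < y } (when this is a ladder),
   W_y being the set refuting C_y. A transfinite recursion yields a set V of size kappa of
   codes of points of the product of the W_y, each code lying above all values of the
   earlier codes. B guesses V at J-positively many delta. At such a limit delta, since
   |B^i_delta| < |S|, some y has X_xi(y) in W_y for every y-coherent xi in B^i_delta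
   (otherwise a failing xi chosen for each y would inject S into B^i_delta). The separation
   of V makes the ladder of C_y at delta cofinal, so it lies inside W_y and delta belongs
   to the J-small set where W_y refutes C_y. By kappa-completeness these |S| < kappa sets,
   together with the bounded set of minimal points, cannot cover a J-positive set. *)

Lemma proj1_sig_injective {A : Type} (P : A -> Prop) : injective (@proj1_sig A P).
Proof. intros [a Ha] [b Hb]; simpl; intros <-; f_equal; apply proof_irrelevance. Qed.

Lemma Fix_unfold {A T : Type} {R : A -> A -> Prop} (Rwf : well_founded R)
    (F : forall x, (forall y, R y x -> T) -> T) (x : A) :
  Fix Rwf (fun _ => T) F x = F x (fun y _ => Fix Rwf (fun _ => T) F y).
Proof.
  apply (Fix_eq Rwf (fun _ => T) F); intros x' f g Hfg.
  replace g with f; [reflexivity|].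
  apply functional_extensionality_dep; intros y.
  apply functional_extensionality_dep; intros H; apply Hfg.
Qed.

Lemma Jpos_mono {K : Type} {lt : K -> K -> Prop} {J : (K -> Prop) -> Prop} {A A' : K -> Prop} :
  is_ideal lt J -> Jpos J A -> (forall x, A x -> A' x) -> Jpos J A'.
Proof. intros [_ [_ [_ [Hsub _]]]] HA HAA' HJ; exact (HA (Hsub _ _ HJ HAA')). Qed.

Lemma two_points_of_uncountable {K : Type} : uncountable K -> exists k0 k1 : K, k0 <> k1.
Proof.
  intros Hunc; apply NNPP; intros Hno; apply Hunc.
  exists (fun _ => 0); intros x y _.
  apply NNPP; intros Hxy; apply Hno; exists x, y; exact Hxy.
Qed.

Lemma two_points_of_inj_nat {S : Type} : inj_le nat S -> exists s0 s1 : S, s0 <> s1.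
Proof. intros [f Hf]; exists (f 0), (f 1); intros E; apply Hf in E; discriminate. Qed.

Lemma inj_le_of_inj_le_exp {A B : Type} {b0 b1 : B} :
  b0 <> b1 -> inj_le (A -> B) B -> inj_le A B.
Proof.
  intros Hb [g Hg].
  exists (fun a => g (fun t => if excluded_middle_informative (t = a) then b1 else b0)).
  intros a a' E; apply Hg, (f_equal (fun u => u a)) in E.
  destruct (excluded_middle_informative (a = a)) as [_|Hn]; [|contradiction].
  destruct (excluded_middle_informative (a = a')) as [Ea|_]; [exact Ea|].
  exfalso; apply Hb; symmetry; exact E.
Qed.

(* The value at [a0] records the first component, the value at [a1] the code of the second. *)
Lemma inj_le_prod_exp {A B : Type} {a0 a1 : A} :
  a0 <> a1 -> inj_le (A -> B) B -> inj_le (B * (A -> B)) B.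
Proof.
  intros Ha [g Hg].
  exists (fun p => g (fun t => if excluded_middle_informative (t = a0) then fst p else g (snd p))).
  intros [b s] [b' s'] E; apply Hg in E; simpl in E.
  pose proof (f_equal (fun u => u a0) E) as E0; pose proof (f_equal (fun u => u a1) E) as E1.
  simpl in E0, E1.
  destruct (excluded_middle_informative (a0 = a0)) as [_|Hn]; [|contradiction].
  destruct (excluded_middle_informative (a1 = a0)) as [Hn|_]; [congruence|].
  apply Hg in E1; subst; reflexivity.
Qed.

Lemma small_set_good_index {S T : Type} (slt : S -> S -> Prop) (good : S -> T -> Prop)
    (Bset : T -> Prop) :
  (forall a b, slt a b \/ a = b \/ slt b a) -> card_lt (sub Bset) S ->
  exists y, forall xi, Bset xi -> (forall y', slt y' y -> good y' xi) -> good y xi.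
Proof.
  intros Htot HB; apply NNPP; intros Hno.
  assert (Hbad : forall y, exists xi,
             Bset xi /\ (forall y', slt y' y -> good y' xi) /\ ~ good y xi).
  { intros y; apply NNPP; intros Hn; apply Hno; exists y; intros xi Hxi Hcoh.
    apply NNPP; intros Hg; apply Hn; exists xi; auto. }
  destruct (choice _ Hbad) as [bad Hb].
  (* a failure at [y] is coherent below [y], so failures at distinct indices differ *)
  apply HB; exists (fun y => exist Bset (bad y) (proj1 (Hb y))).
  intros a b E; apply (f_equal (@proj1_sig _ _)) in E; simpl in E.
  destruct (Htot a b) as [H|[H|H]]; [exfalso|exact H|exfalso].
  - apply (proj2 (proj2 (Hb a))); rewrite E; apply (proj1 (proj2 (Hb b))), H.
  - apply (proj2 (proj2 (Hb b))); rewrite <- E; apply (proj1 (proj2 (Hb a))), H.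
Qed.

Definition ladder {K : Type} (lt : K -> K -> Prop) (d : K) (A : K -> Prop) : Prop :=
  (forall x, A x -> lt x d) /\ sup_eq lt A d.

Definition cofinal_in {K : Type} (lt : K -> K -> Prop) (d : K) (A : K -> Prop) : Prop :=
  forall g, lt g d -> exists x, A x /\ lt g x.

(* Replacing a non-ladder by all of [d] yields a ladder at every limit [d] and changes
   nothing where [A] already is a ladder. *)
Definition ladder_or_below {K : Type} (lt : K -> K -> Prop) (d : K) (A : K -> Prop) : K -> Prop :=
  fun x => (ladder lt d A /\ A x) \/ (~ ladder lt d A /\ lt x d).

Lemma cofinal_acc {K : Type} {lt : K -> K -> Prop} (d : K) (A : K -> Prop) :
  (forall x, A x -> lt x d) -> cofinal_in lt d A -> (exists g, lt g d) -> acc lt d.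
Proof.
  intros Hbelow Hcof Hne; split; [exact Hne|].
  intros g Hg; destruct (Hcof g Hg) as [x [Hx Hgx]].
  exists x; split; [exact Hgx|apply Hbelow, Hx].
Qed.

Lemma ladder_or_below_sub {K : Type} {lt : K -> K -> Prop} (d : K) (A : K -> Prop) x :
  ladder lt d A -> ladder_or_below lt d A x -> A x.
Proof. intros HA [[_ Hx]|[Hn _]]; [exact Hx|contradiction]. Qed.

Section WellOrder.
Context {K : Type} {lt : K -> K -> Prop}.
Hypothesis Hwo : is_well_order lt.

Lemma lt_asym {x y} : lt x y -> ~ lt y x.
Proof. intros Hxy Hyx; exact (wo_irrefl Hwo x (wo_trans Hwo _ _ _ Hxy Hyx)). Qed.

Lemma not_lt_le {x y} : ~ lt x y -> le lt y x.
Proof. intros Hn; destruct (wo_total Hwo x y) as [H|[->|H]]; [contradiction|right|left]; auto. Qed.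

Lemma lt_le_trans {x y z} : lt x y -> le lt y z -> lt x z.
Proof. intros Hxy [Hyz| <-]; [exact (wo_trans Hwo _ _ _ Hxy Hyz)|exact Hxy]. Qed.

Lemma sup_eq_cofinal {d A} : sup_eq lt A d -> cofinal_in lt d A.
Proof.
  intros [_ Hleast] g Hg; apply NNPP; intros Hno.
  assert (Hbound : forall x, A x -> le lt x g).
  { intros x Hx; apply not_lt_le; intros Hgx; apply Hno; exists x; auto. }
  destruct (Hleast g Hbound) as [Hdg| ->]; [exact (lt_asym Hg Hdg)|exact (wo_irrefl Hwo _ Hg)].
Qed.

Lemma ladder_of_cofinal d A : (forall x, A x -> lt x d) -> cofinal_in lt d A -> ladder lt d A.
Proof.
  intros Hbelow Hcof; split; [exact Hbelow|split].
  - intros x Hx; left; apply Hbelow, Hx.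
  - intros g Hg; apply not_lt_le; intros Hgd.
    destruct (Hcof g Hgd) as [x [Hx Hgx]].
    destruct (Hg x Hx) as [Hxg| ->]; [exact (lt_asym Hgx Hxg)|exact (wo_irrefl Hwo _ Hgx)].
Qed.

Lemma ladder_ladder_or_below d A : acc lt d -> ladder lt d (ladder_or_below lt d A).
Proof.
  intros [_ Hlim]; destruct (classic (ladder lt d A)) as [HA|HA]; apply ladder_of_cofinal.
  - intros x [[_ Hx]|[Hn _]]; [apply (proj1 HA), Hx|contradiction].
  - intros g Hg; destruct (sup_eq_cofinal (proj2 HA) g Hg) as [x [Hx Hgx]].
    exists x; split; [left|]; auto.
  - intros x [[Hl _]|[_ Hx]]; [contradiction|exact Hx].
  - intros g Hg; destruct (Hlim g Hg) as [x [Hgx Hxd]].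
    exists x; split; [right|]; auto.
Qed.

Lemma minimal_bounded :
  (exists k0 k1 : K, k0 <> k1) -> bounded lt (fun d => forall g, ~ lt g d).
Proof.
  intros [k0 [k1 Hk]].
  assert (Hmb : exists m b, lt m b).
  { destruct (wo_total Hwo k0 k1) as [H|[H|H]]; [eauto|contradiction|eauto]. }
  destruct Hmb as [m [b Hmb]]; exists b; intros d Hd.
  destruct (wo_total Hwo d m) as [H|[->|H]].
  - exact (wo_trans Hwo _ _ _ H Hmb).
  - exact Hmb.
  - contradiction (Hd m H).
Qed.

Lemma well_order_inverse_image {A : Type} (f : A -> K) :
  injective f -> is_well_order (fun a b => lt (f a) (f b)).
Proof.
  intros Hf; split.
  - intros a; apply (wo_irrefl Hwo).
  - intros a b c; apply (wo_trans Hwo).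
  - intros a b; destruct (wo_total Hwo (f a) (f b)) as [H|[H|H]]; auto.
  - apply wf_inverse_image, (wo_wf Hwo).
Qed.

Lemma increasing_reflects_lt (h : K -> K) :
  (forall a a', lt a' a -> lt (h a') (h a)) -> forall a b, lt (h a) (h b) -> lt a b.
Proof.
  intros Hinc a b Hab; destruct (wo_total Hwo a b) as [H|[->|H]]; [exact H| |].
  - contradiction (wo_irrefl Hwo _ Hab).
  - contradiction (lt_asym Hab (Hinc _ _ H)).
Qed.

Lemma increasing_injective (h : K -> K) :
  (forall a a', lt a' a -> lt (h a') (h a)) -> injective h.
Proof.
  intros Hinc a b E; destruct (wo_total Hwo a b) as [H|[H|H]]; [|exact H|];
    apply Hinc in H; rewrite E in H; contradiction (wo_irrefl Hwo _ H).
Qed.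

End WellOrder.

Section RegularCardinal.
Context {K : Type} {lt : K -> K -> Prop}.
Hypothesis Hcard : is_cardinal_order lt.
Hypothesis Hreg : regular lt.

Lemma size_kappa_unbounded (W : K -> Prop) :
  size_kappa W -> forall b, exists w, W w /\ ~ lt w b.
Proof.
  intros [f Hf] b; apply NNPP; intros Hno.
  assert (Hbelow : forall w, W w -> lt w b).
  { intros w Hw; apply NNPP; intros Hn; apply Hno; exists w; auto. }
  apply (proj2 Hcard b).
  exists (fun k => exist (fun y => lt y b) (proj1_sig (f k)) (Hbelow _ (proj2_sig (f k)))).
  intros x y E; apply Hf, proj1_sig_injective.
  exact (f_equal (@proj1_sig _ _) E).
Qed.

Lemma regular_bounded_image (A : Type) (phi : A -> K) :
  card_lt A K -> exists b, forall a, lt (phi a) b.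
Proof.
  intros HA; apply NNPP; intros Hno.
  assert (Hunb : ~ bounded lt (fun x => exists a, x = phi a)).
  { intros [b Hb]; apply Hno; exists b; intros a; apply Hb; exists a; reflexivity. }
  destruct (Hreg _ Hunb) as [f Hf]; apply HA.
  destruct (choice (fun k a => proj1_sig (f k) = phi a)) as [pre Hpre].
  { intros k; destruct (proj2_sig (f k)) as [a Ha]; exists a; exact Ha. }
  exists pre; intros x y E; apply Hf, proj1_sig_injective.
  rewrite Hpre, Hpre, E; reflexivity.
Qed.

Lemma regular_recursion (P : K -> K -> Prop) :
  (forall beta, exists xi, P beta xi) ->
  exists h : K -> K,
    forall a, exists beta, (forall a', lt a' a -> lt (h a') beta) /\ P beta (h a).
Proof.
  intros HP; destruct (choice P HP) as [next Hnext].
  set (F := fun a (rec : forall a', lt a' a -> K) =>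
         next (epsilon (inhabits a) (fun b => forall a' (H : lt a' a), lt (rec a' H) b))).
  set (h := Fix (wo_wf (proj1 Hcard)) (fun _ => K) F).
  exists h; intros a.
  unfold h; rewrite Fix_unfold; fold h; unfold F at 1.
  eexists; split; [|apply Hnext].
  apply (epsilon_spec (inhabits a) (fun b => forall a' (H : lt a' a), lt (h a') b)).
  destruct (regular_bounded_image _ (fun z : sub (fun y => lt y a) => h (proj1_sig z))
              (proj2 Hcard a)) as [b Hb].
  exists b; intros a' H; exact (Hb (exist _ a' H)).
Qed.

Lemma unbounded_decoding {A : Type} :
  inhabited A -> inj_le (K * A) K ->
  exists X : K -> A, forall a rho, exists xi, ~ lt xi rho /\ X xi = a.
Proof.
  intros inhA [c Hc].
  exists (fun xi => epsilon inhA (fun a => exists k, c (k, a) = xi)); intros a rho.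
  assert (Hfiber : size_kappa (fun xi => exists k, xi = c (k, a))).
  { exists (fun k => exist _ (c (k, a)) (ex_intro _ k eq_refl)).
    intros k k' E; apply (f_equal (@proj1_sig _ _)), Hc in E; congruence. }
  destruct (size_kappa_unbounded _ Hfiber rho) as [xi [[k ->] Hxi]].
  exists (c (k, a)); split; [exact Hxi|].
  destruct (epsilon_spec inhA (fun a' => exists k', c (k', a') = c (k, a))) as [k' E];
    [exists a, k; reflexivity|].
  apply Hc in E; congruence.
Qed.

End RegularCardinal.

Definition ladder_system {K Ix : Type} (lt : K -> K -> Prop) (valid : K -> Ix -> Prop)
    (C : K -> Ix -> K -> Prop) : Prop :=
  forall d i, acc lt d -> valid d i -> ladder lt d (C d i).

Definition guessed_by {K Ix : Type} (lt : K -> K -> Prop) (valid : K -> Ix -> Prop)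
    (C : K -> Ix -> K -> Prop) (W : K -> Prop) : K -> Prop :=
  fun d => acc lt d /\ exists i, valid d i /\ forall x, C d i x -> W x.

Definition sup_guessed_by {K Ix : Type} (lt : K -> K -> Prop) (valid : K -> Ix -> Prop)
    (B : K -> Ix -> K -> Prop) (W : K -> Prop) : K -> Prop :=
  fun d => exists i, valid d i /\ sup_eq lt (fun x => W x /\ B d i x) d.

Section LadderFromSup.
Context {K S Ix : Type} (lt : K -> K -> Prop) (J : (K -> Prop) -> Prop).
Context (valid : K -> Ix -> Prop) (B : K -> Ix -> K -> Prop).
Context (slt : S -> S -> Prop) (X : K -> S -> K).
Context (refute : (K -> Ix -> K -> Prop) -> K -> Prop).

Hypothesis Hcard : is_cardinal_order lt.
Hypothesis Hreg : regular lt.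
Hypothesis Htwo : exists k0 k1 : K, k0 <> k1.
Hypothesis HJ : is_ideal lt J.
Hypothesis Hcomp : kappa_complete J.
Hypothesis HSK : card_lt S K.
Hypothesis HSinh : inhabited S.
Hypothesis Hslt : is_well_order slt.
Hypothesis HBsmall : forall d i, valid d i -> P_sigma S lt d (B d i).
Hypothesis HBguess : forall W, size_kappa W -> Jpos J (sup_guessed_by lt valid B W).
Hypothesis HX : forall s rho, exists xi, ~ lt xi rho /\ X xi = s.
Hypothesis Hrefute : forall C, ladder_system lt valid C ->
  size_kappa (refute C) /\ J (guessed_by lt valid C (refute C)).

Let Hwo : is_well_order lt := proj1 Hcard.

Definition trace (y : S) (P : K -> Prop) (d : K) (i : Ix) : K -> Prop :=
  fun x => lt x d /\ exists xi, B d i xi /\ P xi /\ x = X xi y.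

Definition refuter : S -> K -> Prop :=
  Fix (wo_wf Hslt) (fun _ => K -> Prop) (fun y rec =>
    refute (fun d i => ladder_or_below lt d
      (trace y (fun xi => forall y' (H : slt y' y), rec y' H (X xi y')) d i))).

Definition coherent (y : S) (xi : K) : Prop := forall y', slt y' y -> refuter y' (X xi y').

Definition candidate (y : S) : K -> Ix -> K -> Prop :=
  fun d i => ladder_or_below lt d (trace y (coherent y) d i).

Lemma refuter_eq y : refuter y = refute (candidate y).
Proof. unfold refuter at 1; rewrite Fix_unfold; reflexivity. Qed.

Lemma candidate_ladder_system y : ladder_system lt valid (candidate y).
Proof. intros d i Hd _; exact (ladder_ladder_or_below Hwo _ _ Hd). Qed.

Lemma refuter_spec y :
  size_kappa (refuter y) /\ J (guessed_by lt valid (candidate y) (refuter y)).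
Proof. rewrite refuter_eq; apply Hrefute, candidate_ladder_system. Qed.

Lemma code_above beta :
  exists xi, forall y, refuter y (X xi y) /\ lt (X xi y) xi /\ ~ lt (X xi y) beta.
Proof.
  destruct (choice (fun y w => refuter y w /\ ~ lt w beta)) as [s Hs].
  { intros y; exact (size_kappa_unbounded Hcard _ (proj1 (refuter_spec y)) beta). }
  destruct (regular_bounded_image Hreg _ s HSK) as [rho Hrho].
  destruct (HX s rho) as [xi [Hxi <-]].
  exists xi; intros y; split; [apply Hs|split; [|apply Hs]].
  exact (lt_le_trans Hwo (Hrho y) (not_lt_le Hwo Hxi)).
Qed.

Definition coded (V : K -> Prop) : Prop := forall xi, V xi -> forall y, refuter y (X xi y).

Definition separated (V : K -> Prop) : Prop :=
  forall xi1 xi2, V xi1 -> V xi2 -> lt xi1 xi2 -> forall y, lt xi1 (X xi2 y) /\ lt (X xi2 y) xi2.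

Lemma coded_separated_exists : exists V, size_kappa V /\ coded V /\ separated V.
Proof.
  destruct (regular_recursion Hcard Hreg _ code_above) as [h Hh].
  assert (Hsep : forall a a' y, lt a' a -> lt (h a') (X (h a) y) /\ lt (X (h a) y) (h a)).
  { intros a a' y Ha; destruct (Hh a) as [beta [Hbelow Hcode]].
    split; [|apply Hcode].
    exact (lt_le_trans Hwo (Hbelow a' Ha) (not_lt_le Hwo (proj2 (proj2 (Hcode y))))). }
  assert (Hinc : forall a a', lt a' a -> lt (h a') (h a)).
  { intros a a' Ha; destruct HSinh as [y].
    exact (wo_trans Hwo _ _ _ (proj1 (Hsep a a' y Ha)) (proj2 (Hsep a a' y Ha))). }
  exists (fun xi => exists a, xi = h a); split; [|split].
  - exists (fun a => exist _ (h a) (ex_intro _ a eq_refl)).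
    intros a b E; apply (f_equal (@proj1_sig _ _)) in E.
    exact (increasing_injective Hwo _ Hinc _ _ E).
  - intros _ [a ->] y; destruct (Hh a) as [beta [_ Hcode]]; apply Hcode.
  - intros _ _ [a1 ->] [a2 ->] H12 y.
    exact (Hsep a2 a1 y (increasing_reflects_lt Hwo _ Hinc _ _ H12)).
Qed.

Lemma trace_ladder V d i y :
  coded V -> separated V -> (forall x, B d i x -> lt x d) ->
  cofinal_in lt d (fun x => V x /\ B d i x) -> ladder lt d (trace y (coherent y) d i).
Proof.
  intros Hcod Hsep Hbelow Hcof.
  apply (ladder_of_cofinal Hwo); [intros x [Hx _]; exact Hx|].
  intros g Hg.
  destruct (Hcof g Hg) as [xi1 [[HV1 HB1] Hg1]].
  destruct (Hcof xi1 (Hbelow _ HB1)) as [xi2 [[HV2 HB2] H12]].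
  destruct (Hsep _ _ HV1 HV2 H12 y) as [H1y Hy2].
  exists (X xi2 y); split.
  - split; [exact (wo_trans Hwo _ _ _ Hy2 (Hbelow _ HB2))|].
    exists xi2; split; [exact HB2|split; [|reflexivity]].
    intros y' _; apply Hcod, HV2.
  - exact (wo_trans Hwo _ _ _ Hg1 H1y).
Qed.

Lemma sup_guessed_refuted V d :
  coded V -> separated V -> sup_guessed_by lt valid B V d -> (exists g, lt g d) ->
  exists y, guessed_by lt valid (candidate y) (refuter y) d.
Proof.
  intros Hcod Hsep [i [Hv Hsup]] Hne.
  destruct (HBsmall d i Hv) as [Hbelow Hsmall].
  pose proof (sup_eq_cofinal Hwo Hsup) as Hcof.
  destruct (small_set_good_index slt (fun y xi => refuter y (X xi y)) (B d i)
              (wo_total Hslt) Hsmall) as [y Hy].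
  exists y; split.
  - exact (cofinal_acc _ _ (fun x Hx => Hbelow x (proj2 Hx)) Hcof Hne).
  - exists i; split; [exact Hv|]; intros x Hx.
    apply (ladder_or_below_sub _ _ _ (trace_ladder V d i y Hcod Hsep Hbelow Hcof)) in Hx.
    destruct Hx as [_ [xi [HB [Hcoh ->]]]]; exact (Hy xi HB Hcoh).
Qed.

Lemma ladder_from_sup_absurd : False.
Proof.
  destruct coded_separated_exists as [V [HV [Hcod Hsep]]].
  destruct HJ as [_ [_ [Hbdd [Hsub Hun]]]].
  apply (HBguess V HV), (Hsub _ (fun d => (forall g, ~ lt g d) \/
                          exists y, guessed_by lt valid (candidate y) (refuter y) d)).
  - apply Hun; [exact (Hbdd _ (minimal_bounded Hwo Htwo))|].
    apply Hcomp; [exact HSK|intros y; apply refuter_spec].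
  - intros d Hd; destruct (classic (exists g, lt g d)) as [Hne|Hmin].
    + right; exact (sup_guessed_refuted V d Hcod Hsep Hd Hne).
    + left; intros g Hg; apply Hmin; exists g; exact Hg.
Qed.

End LadderFromSup.

Theorem ladder_guessing_of_sup_guessing {K S Ix : Type} (lt : K -> K -> Prop)
    (J : (K -> Prop) -> Prop) (valid : K -> Ix -> Prop) (B : K -> Ix -> K -> Prop) :
  regular_uncountable_cardinal lt -> is_ideal lt J -> kappa_complete J -> good_sigma K S ->
  (forall d i, valid d i -> P_sigma S lt d (B d i)) ->
  (forall W, size_kappa W -> Jpos J (sup_guessed_by lt valid B W)) ->
  exists C, ladder_system lt valid C /\
    forall W, size_kappa W -> Jpos J (guessed_by lt valid C W).
Proof.
  intros [Hcard [Hreg Hunc]] HJ Hcomp [HnatS [HSK HexpK]] HBsmall HBguess.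
  apply NNPP; intros Hno.
  destruct (choice (fun C W => ladder_system lt valid C ->
                      size_kappa W /\ J (guessed_by lt valid C W))) as [refute Hrefute].
  { intros C; destruct (classic (ladder_system lt valid C)) as [HC|HC];
      [|exists (fun _ => True); contradiction].
    apply NNPP; intros Hn; apply Hno; exists C; split; [exact HC|].
    intros W HW HJW; apply Hn; exists W; auto. }
  destruct (two_points_of_uncountable Hunc) as [k0 [k1 Hk]].
  destruct (two_points_of_inj_nat HnatS) as [s0 [s1 Hs]].
  destruct (inj_le_of_inj_le_exp Hk HexpK) as [fS HfS].
  destruct (unbounded_decoding Hcard (inhabits (fun _ : S => k0)) (inj_le_prod_exp Hs HexpK))
    as [X HX].
  exact (ladder_from_sup_absurd lt J valid B _ X refute Hcard Hreg
           (ex_intro _ k0 (ex_intro _ k1 Hk)) HJ Hcomp HSK (inhabits s0)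
           (well_order_inverse_image (proj1 Hcard) fS HfS) HBsmall HBguess HX Hrefute).
Qed.

Theorem proposition3p15 (K : Type) (lt : K -> K -> Prop) (J : (K -> Prop) -> Prop) :
  regular_uncountable_cardinal lt ->
  is_ideal lt J -> kappa_complete J ->
  (forall (S Tau : Type), good_sigma K S -> good_tau K Tau ->
     clubsuit_cof_tau lt J S Tau -> clubsuit_tau lt J Tau) /\
  (forall S : Type, good_sigma K S ->
     clubsuit_cof lt J S -> clubsuit_minus lt J).
Proof.
  intros Hkappa HJ Hcomp; split.
  -
    intros S Tau HS _ [B [HBsmall HBguess]].
    destruct (ladder_guessing_of_sup_guessing lt J (fun _ _ => True) B Hkappa HJ Hcomp HS)
      as [C [HC HCguess]].
    + intros d i _; apply HBsmall.
    + intros W HW; apply (Jpos_mono HJ (HBguess W HW)).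
      intros d [i Hi]; exists i; split; [exact I|exact Hi].
    + exists C; split; [intros d i Hd; exact (HC d i Hd I)|].
      intros W HW; apply (Jpos_mono HJ (HCguess W HW)).
      intros d [Hd [i [_ Hi]]]; split; [exact Hd|exists i; exact Hi].
  - intros S HS [B [HBsmall HBguess]].
    exact (ladder_guessing_of_sup_guessing lt J (fun d i => lt i d) B Hkappa HJ Hcomp HS
             HBsmall HBguess).
Qed.
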